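(* For every $n\ge2$, in the matching market with $n$ agents and $n$ items, every deterministic truthful non-bossy mechanism has rank-approximation factor at least $n-1$.
   Context: Matching market: $n$ agents and $m$ items (here $m=n$); each agent $j$ reports any strict total order $\succ_j$ on the items. An outcome is a matching; an unmatched agent receives the null item, ranked below every item. A deterministic mechanism maps each profile to a matching. It is truthful if for every agent $j$, $\succ_{-j}$, and $\succ_j,\succ'_j$, the item $j$ receives under $(\succ_j,\succ_{-j})$ is weakly preferred under $\succ_j$ to the item $j$ receives under $(\succ'_j,\succ_{-j})$. It is non-bossy if whenever an agent changes his reported order and his own allocated item stays the same, the whole output matching stays the same. $\mathrm{rank}_i(M;\succ)$ is the number of agents assigned one of their top-$i$ items by $M$, $\mathrm{maxrank}_i(\succ)$ its maximum over matchings; a mechanism has rank-approximation factor $\alpha$ if on every profile its output satisfies $\mathrm{rank}_i\ge\mathrm{maxrank}_i/\alpha$ for all $i$ (so a mechanism has factor smaller than $\alpha$ only if this holds for some value below $\alpha$). *)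

From HB Require Import structures.
From mathcomp Require Import all_boot all_order all_algebra all_fingroup.
Set Implicit Arguments. Unset Strict Implicit. Unset Printing Implicit Defensive.
Import Order.TTheory GRing.Theory Num.Theory.

(* Agents and items are both 'I_n (m = n).
   A strict total order on items is encoded by a permutation [r : {perm 'I_n}]
   giving each item its rank: item a is preferred to item b iff r a < r b
   (rank 0 = top item).  The "top-i items" are those with rank < i. *)
Definition pref n := {perm 'I_n}.
Definition profile n := {ffun 'I_n -> pref n}.

Definition outcome n := {ffun 'I_n -> option 'I_n}.

Definition is_matching n (M : outcome n) : bool :=
  [forall j, forall k, ((j != k) && (M j != None)) ==> (M j != M k)].

Definition weakly_prefers n (r : pref n) (x y : option 'I_n) : bool :=
  match x, y with
  | Some a, Some b => (r a <= r b)%N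
  | Some _, None => true
  | None, None => true
  | None, Some _ => false
  end.

Definition update n (P : profile n) (j : 'I_n) (r : pref n) : profile n :=
  [ffun k => if k == j then r else P k].

Definition mechanism n := profile n -> outcome n.

Definition truthful n (f : mechanism n) : Prop :=
  forall (P : profile n) (j : 'I_n) (r' : pref n),
    weakly_prefers (P j) (f P j) (f (update P j r') j).

Definition non_bossy n (f : mechanism n) : Prop :=
  forall (P : profile n) (j : 'I_n) (r' : pref n),
    f (update P j r') j = f P j -> f (update P j r') = f P.

Definition rank_i n (i : nat) (M : outcome n) (P : profile n) : nat :=
  #|[set j | if M j is Some a then (P j a < i)%N else false]|.

Definition maxrank_i n (i : nat) (P : profile n) : nat :=
  \max_(M : outcome n | is_matching M) rank_i i M P.

Definition has_rank_factor (R : realFieldType) n (f : mechanism n) (alpha : R)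
  : Prop :=
  (0 < alpha)%R /\
  forall (P : profile n) (i : nat),
    ((maxrank_i i P)%:R / alpha <= (rank_i i (f P) P)%:R)%R.

From mathcomp Require Import all_boot all_order all_algebra all_fingroup.
From mathcomp Require Import zify.
Import Order.TTheory GRing.Theory Num.Theory.

Set Implicit Arguments.
Unset Strict Implicit.
Unset Printing Implicit Defensive.

(* Truthfulness and non-bossiness together give Maskin monotonicity: the
   output does not change when every agent moves to an order in which the
   items he ranks weakly above his own item were already weakly above it.
   Start from the profile in which every agent reports the identity ranking
   0 > 1 > ..., with outcome y.  An agent holding item a > 0 may move item a - 1 to the
   top (swapping it with item 0), and an unmatched agent may put any item on
   top, so the outcome stays y.  The new tops can be chosen pairwise distinct
   for all agents but the holder of item 0, so some matching gives n - 1
   agents their top item, while y gives it to at most one agent. *)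

Definition monotonic_transformation n (old new : pref n) (y : option 'I_n) :=
  if y is Some a then forall b, (new b <= new a)%N -> (old b <= old a)%N
  else True.

Lemma monotonic_transformation_refl n (r : pref n) y :
  monotonic_transformation r r y.
Proof. by case: y => //= a b. Qed.

Section MaskinMonotonicity.

Variables (n : nat) (f : mechanism n).
Hypotheses (htruth : truthful f) (hnb : non_bossy f).

Lemma update_updateK (P : profile n) (j : 'I_n) (r : pref n) :
  update (update P j r) j (P j) = P.
Proof. by apply/ffunP=> k; rewrite !ffunE; case: eqP => // ->. Qed.

Lemma monotonic_update_fixed (P : profile n) (j : 'I_n) (r : pref n) :
  monotonic_transformation (P j) r (f P j) -> f (update P j r) = f P.
Proof.
move=> hmono; apply: hnb.
have truth_old := htruth P j r.
have truth_new := htruth (update P j r) j (P j).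
rewrite update_updateK /update ffunE eqxx in truth_new.
move: hmono truth_old truth_new.
case: (f P j) => [a|]; case: (f _ j) => [b|] //= hmono ba ab.
congr Some; apply: (perm_inj (s := P j)); apply: val_inj; apply/eqP.
by rewrite eqn_leq ba hmono.
Qed.

Theorem maskin_monotonic (P Q : profile n) :
  (forall k, monotonic_transformation (P k) (Q k) (f P k)) -> f Q = f P.
Proof.
move=> hmono.
pose mix (s : seq 'I_n) : profile n := [ffun k => if k \in s then Q k else P k].
have -> : Q = mix (enum 'I_n) by apply/ffunP=> k; rewrite ffunE mem_enum.
elim: (enum 'I_n) => [|x s IH].
  by congr f; apply/ffunP=> k; rewrite ffunE.
have -> : mix (x :: s) = update (mix s) x (Q x).
  apply/ffunP=> k; rewrite !ffunE in_cons.
  by case: eqP => [->|]; rewrite ?ffunE.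
rewrite monotonic_update_fixed IH // ffunE.
by case: (x \in s); [exact: monotonic_transformation_refl | exact: hmono].
Qed.

End MaskinMonotonicity.

Lemma exists_inj_in_into (T T' : finType) (A : {set T}) (B : {set T'})
    (b0 : T') :
  (#|A| <= #|B|)%N ->
  exists h : T -> T', {in A &, injective h} /\ {in A, forall x, h x \in B}.
Proof.
move=> leAB; exists (fun x => nth b0 (enum B) (index x (enum A))).
have ltB x : x \in A -> (index x (enum A) < size (enum B))%N.
  by move=> xA; rewrite -cardE (leq_trans _ leAB) // cardE index_mem mem_enum.
split=> [x x' xA x'A /= /eqP|x xA]; last by rewrite -mem_enum mem_nth ?ltB.
rewrite nth_uniq ?ltB ?enum_uniq // => /eqP.
by apply: (index_inj x); rewrite mem_enum.
Qed.

Lemma extend_inj_in (T : finType) (A U : {set T}) (g : T -> T) :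
  [disjoint A & U] -> {in A &, injective g} ->
  exists g' : T -> T,
    {in A :|: U &, injective g'} /\ (forall x, x \notin U -> g' x = g x).
Proof.
move=> dAU ginj; have [x0|T0] := pickP T; last first.
  by exists g; split=> [x|//]; have := T0 x.
have leU : (#|U| <= #|~: (g @: A)|)%N.
  have cardAU : #|A :|: U| = (#|A| + #|U|)%N.
    by apply/eqP; rewrite (leq_card_setU A U).2.
  have := cardsC (g @: A); have := max_card (A :|: U).
  by rewrite cardAU card_in_imset //; lia.
have [h [hinj hout]] := exists_inj_in_into x0 leU.
have notUA x : x \in A -> (x \in U) = false.
  by move=> xA; apply: contraTF dAU => xU; apply/pred0Pn; exists x; apply/andP.
have g_neq_h x x' : x \in A -> x' \in U -> g x != h x'.
  move=> xA x'U; have := hout x' x'U; rewrite inE.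
  by apply: contraNneq => <-; rewrite imset_f.
exists (fun x => if x \in U then h x else g x); split=> [x x'|x /negbTE -> //].
move=> /setUP[xA|xU] /setUP[x'A|x'U].
- by rewrite !notUA //; apply: ginj.
- by rewrite notUA // x'U => e; have := g_neq_h _ _ xA x'U; rewrite e eqxx.
- by rewrite xU notUA // => e; have := g_neq_h _ _ x'A xU; rewrite e eqxx.
- by rewrite xU x'U; apply: hinj.
Qed.

Lemma matching_inj n (M : outcome n) j k :
  is_matching M -> M j = M k -> M j != None -> j = k.
Proof.
move=> /forallP/(_ j)/forallP/(_ k) hjk Mjk Mj.
by apply/eqP; apply: contraTT hjk => njk; rewrite njk Mj Mjk eqxx.
Qed.

Lemma card_holders_le1 n (M : outcome n) (a : 'I_n) :
  is_matching M -> (#|[set k | M k == Some a]| <= 1)%N.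
Proof.
move=> Mm; rewrite leqNgt; apply/card_gt1P => -[j [k [+ + njk]]].
rewrite !inE => /eqP Mj /eqP Mk; apply/negP: njk; rewrite negbK.
by apply/eqP/(matching_inj Mm); rewrite Mj ?Mk.
Qed.

Lemma leq_maxrank n (P : profile n) (i : nat) (D : {set 'I_n})
    (t : 'I_n -> 'I_n) :
  {in D &, injective t} -> {in D, forall k, (P k (t k) < i)%N} ->
  (#|D| <= maxrank_i i P)%N.
Proof.
move=> tinj tD.
pose M : outcome n := [ffun k => if k \in D then Some (t k) else None].
have Mm : is_matching M.
  apply/forallP=> j; apply/forallP=> k; apply/implyP=> /andP[njk].
  rewrite !ffunE; case: ifP => // jD _; case: ifP => // kD.
  by apply: contra njk => /eqP[/(tinj _ _ jD kD) ->].
apply: leq_trans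
  (@leq_bigmax_cond _ (@is_matching n) (fun M => rank_i i M P) M Mm).
apply: subset_leq_card; apply/subsetP=> k kD.
by rewrite inE ffunE kD tD.
Qed.

Lemma rank_factor_ge (R : realFieldType) n (f : mechanism n) (alpha : R)
    (P : profile n) (i m : nat) :
  has_rank_factor f alpha -> (rank_i i (f P) P <= 1)%N ->
  (m <= maxrank_i i P)%N -> (m%:R <= alpha)%R.
Proof.
move=> [alpha_gt0 hfac] rank_le1 m_le.
have := hfac P i; rewrite ler_pdivrMr // => hP.
apply: le_trans (_ : (maxrank_i i P)%:R <= alpha)%R; first by rewrite ler_nat.
apply: le_trans hP _; rewrite -[leRHS]mul1r ler_wpM2r ?lern1 //.
exact: ltW.
Qed.

Lemma tperm0_monotonic n (x a : 'I_n.+1) :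
  (x <= a)%N -> monotonic_transformation 1%g (tperm x ord0) (Some a).
Proof.
move=> xa b /=; rewrite !perm1.
case: (tpermP x ord0 a) xa => [->|->|ax a0] xa.
- rewrite leqn0 => /eqP b0; have : tperm x ord0 b = tperm x ord0 x.
    by rewrite tpermL; apply: val_inj.
  by move/perm_inj ->.
- have -> : x = ord0 by apply: val_inj; move: xa; rewrite /= leqn0 => /eqP.
  by rewrite tperm1 perm1.
- by case: (tpermP x ord0 b) => [->|->|//]; rewrite ?leq0n.
Qed.

Section LowRankProfile.

Variables (n : nat) (f : mechanism n.+1).
Hypotheses (hmatch : forall P, is_matching (f P)) (htruth : truthful f)
  (hnb : non_bossy f).

Let y := f [ffun=> 1%g].
Let A := [set k | if y k is Some a then a != ord0 else false].
Let U := [set k | y k == None].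
Let below k : 'I_n.+1 := if y k is Some a then inord a.-1 else ord0.

Let val_below k a : y k = Some a -> (below k : nat) = a.-1.
Proof.
by rewrite /below => ->; rewrite inordK // (leq_ltn_trans (leq_pred _)).
Qed.

Let below_inj : {in A &, injective below}.
Proof.
move=> k k'; rewrite !inE.
case yk: (y k) => [a|] //; case yk': (y k') => [a'|] // a0 a'0.
move=> /(congr1 (@nat_of_ord _)).
rewrite (val_below yk) (val_below yk') => eq_pred.
have eq_aa' : a = a'.
  by apply: val_inj; move: a0 a'0; rewrite -!(inj_eq val_inj) /=; lia.
by apply: (matching_inj (hmatch [ffun=> 1%g])); rewrite -/y yk ?yk' ?eq_aa'.
Qed.

Let disjoint_AU : [disjoint A & U].
Proof.
apply/pred0P=> k /=; rewrite /A /U !inE.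
by case: (y k) => [a|] //=; rewrite andbF.
Qed.

Let card_AU : (n <= #|A :|: U|)%N.
Proof.
have holders0 : ~: (A :|: U) = [set k | y k == Some ord0].
  apply/setP=> k; rewrite /A /U !inE; case: (y k) => [a|] //=.
  by rewrite orbF negbK.
have := card_holders_le1 ord0 (hmatch [ffun=> 1%g]).
by rewrite -/y -holders0; have := cardsC (A :|: U); rewrite card_ord; lia.
Qed.

Lemma exists_low_rank_profile :
  exists Q : profile n.+1, (rank_i 1 (f Q) Q <= 1)%N /\ (n <= maxrank_i 1 Q)%N.
Proof.
have [top [top_inj top_below]] := extend_inj_in disjoint_AU below_inj.
have top_val k a : y k = Some a -> (top k : nat) = a.-1.
  by move=> yk; rewrite top_below ?inE ?yk // (val_below yk).
pose Q : profile n.+1 := [ffun k => tperm (top k) ord0].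
have fQ : f Q = y.
  apply: maskin_monotonic => // k; rewrite !ffunE.
  case yk: (f _ k) => [a|] //; apply: tperm0_monotonic.
  by rewrite (top_val _ _ yk) leq_pred.
exists Q; split.
  apply: leq_trans (card_holders_le1 ord0 (hmatch [ffun=> 1%g])).
  apply: subset_leq_card; apply/subsetP=> k; rewrite fQ !inE ffunE -/y.
  case yk: (y k) => [a|] //; have [->//|a0] := eqVneq a ord0.
  have top_neq : top k != a.
    rewrite -(inj_eq (@ord_inj _)) (top_val _ _ yk).
    by move: a0; rewrite -(inj_eq (@ord_inj _)) /=; lia.
  rewrite tpermD ?(eq_sym ord0) // => a_lt1.
  by move: a0; rewrite -(inj_eq val_inj) /= -leqn0 -ltnS a_lt1.
apply: leq_trans card_AU (leq_maxrank top_inj _) => k _.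
by rewrite ffunE tpermL.
Qed.

End LowRankProfile.

Theorem theorem8 (R : realFieldType) (n : nat) (hn : (2 <= n)%N)
  (f : mechanism n)
  (hmatch : forall P : profile n, is_matching (f P))
  (htruth : truthful f) (hnb : non_bossy f)
  (alpha : R) (hfac : has_rank_factor f alpha) :
  ((n - 1)%:R <= alpha)%R.
Proof.
case: n hn f hmatch htruth hnb hfac => [//|n] _ f hmatch htruth hnb hfac.
have [Q [rank_le1 maxrank_ge]] := exists_low_rank_profile hmatch htruth hnb.
by rewrite subn1; apply: rank_factor_ge hfac rank_le1 maxrank_ge.
Qed.
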